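(* Let $n\ge 1$ and $k\ge 1$ be integers with $n\ge 2k$. Then: 1. For every $0\le i\le n-2k$, the list $\mathcal{F}(\alpha_{n,k}^i)$ contains every word of $F_n(2,k)$ (so it is a homogeneous Gray code for $F_n(2,k)$), it is suffix partitioned, and its last word is $\gamma_{n,k}$. 2. The list $\mathcal{F}(\gamma_{n,k})$ contains every word of $F_n(2,k)$, it is suffix partitioned, and its last word is $\alpha_{n,k}^0=1(01)^{k-1}0^{n-2k+1}$ if $k$ is even, and $\alpha_{n,k}^{n-2k}=0^{n-2k}1(01)^{k-1}0$ if $k$ is odd.
   Context: The weight of a binary word is its number of 1's. $F_n(2,k)$ is the set of binary words of length $n$ and weight $k$ containing no two consecutive 1's. For $0\le i\le n-2k+1$ let $\alpha_{n,k}^i=0^i1(01)^{k-1}0^{n-2k+1-i}$, and let $\gamma_{n,k}=0^{n-2k}(01)^k$. A homogeneous transposition of a binary word exchanges a 1 and a 0 such that no 1 occurs strictly between the two exchanged positions. For a set $S$ of binary words of the same length and weight and $\alpha\in S$, the list obtained by applying the greedy algorithm for $S$ to $\alpha$ is built as follows: start with the list $(\alpha)$; repeatedly, for the last word $w$ of the current list, among all words obtainable from $w$ by one homogeneous transposition that lie in $S$ and do not already occur in the list, choose the one obtained by transposing the leftmost possible 1 with (among transpositions of that 1) the leftmost possible 0, and append it; stop when no such word exists. $\mathcal{F}(\alpha)$ denotes the list obtained by applying the greedy algorithm for $F_n(2,k)$ to $\alpha\in F_n(2,k)$. A list is suffix partitioned if, for every word $s$, the words of the list having suffix $s$ occupy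 consecutive positions. *)

(* binary words are [seq bool], position 0 is the leftmost letter. *)
From mathcomp Require Import all_boot.
Set Implicit Arguments. Unset Strict Implicit. Unset Printing Implicit Defensive.

Definition word := seq bool.

Definition weight (w : word) : nat := count id w.

Fixpoint no11 (w : word) : bool :=
  match w with
  | true :: ((true :: _) as _) => false
  | _ :: w' => no11 w'
  | [::] => true
  end.

Definition Fn (n k : nat) : pred word :=
  fun w => [&& size w == n, weight w == k & no11 w].

Definition zeros (m : nat) : word := nseq m false.
Definition zo (m : nat) : word := flatten (nseq m [:: false; true]).

Definition alpha (n k i : nat) : word :=
  zeros i ++ true :: zo (k - 1) ++ zeros (n - 2 * k + 1 - i).

Definition gamma (n k : nat) : word := zeros (n - 2 * k) ++ zo k.

Definition no1between (w : word) (p q : nat) : bool :=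
  all (fun r => ~~ nth false w r) (iota (minn p q).+1 (maxn p q - minn p q).-1).

(* All words obtained from w by one homogeneous transposition, listed in the
   greedy priority order: leftmost 1 first, then (for that 1) leftmost 0. *)
Definition htrans (w : word) : seq word :=
  flatten [seq [seq set_nth false (set_nth false w p false) q true
               | q <- iota 0 (size w) & (~~ nth false w q) && no1between w p q]
          | p <- iota 0 (size w) & nth false w p].

Fixpoint greedy_run (S : pred word) (fuel : nat) (L : seq word) : seq word :=
  match fuel with
  | 0 => L
  | f.+1 =>
      match [seq v <- htrans (last [::] L) | S v && (v \notin L)] with
      | [::] => L
      | v :: _ => greedy_run S f (rcons L v)
      end
  end.

(* The fuel 2^(size alpha) is enough: all words in the list are distinct
   words of length size alpha, so at most 2^(size alpha) - 1 steps occur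
   before the algorithm stops by itself. *)
Definition greedy (S : pred word) (a : word) : seq word :=
  greedy_run S (2 ^ size a) [:: a].

Definition calF (n k : nat) (a : word) : seq word := greedy (Fn n k) a.

Definition suffix_partitioned (L : seq word) : Prop :=
  forall (s : word) (i j l : nat), i <= l -> l <= j -> j < size L ->
    suffix s (nth [::] L i) -> suffix s (nth [::] L j) -> suffix s (nth [::] L l).

(* Every word of F_n(2,k) ends with 0 or with 01, so F_n(2,k) is the union of
   the blocks F_{n-1}(2,k)0 and F_{n-2}(2,k-1)01. As the greedy algorithm always
   moves the leftmost possible 1, a run inside one block leaves the suffix alone
   as long as the block offers a fresh word, so it is the greedy run for the
   shorter words followed by the suffix. When the block is exhausted, its last
   word is y 1 0^t 0 (resp. y 1 0 0^t 01 or 0^t 01), and the first fresh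
   transposition in greedy order moves one 1 across the suffix boundary, into
   the other block. Hence F(alpha_{n,k}^i) is a run on the 0-block ending at
   gamma_{n-1,k}0 or at some alpha_{n-1,k}0, followed by a run from some
   alpha_{n-2,k-1}^j 01 to gamma_{n-2,k-1}01 = gamma_{n,k}; and F(gamma_{n,k}) is
   F(gamma_{n-2,k-1})01 followed by a run on the 0-block, which swaps the two
   ends of the alpha family and thus explains the parity of k. Strong induction
   on n gives coverage, the suffix partition (the two blocks share no nonempty
   suffix) and the last words. *)

From mathcomp Require Import all_boot zify.
Set Implicit Arguments. Unset Strict Implicit. Unset Printing Implicit Defensive.

Definition candidates (S : pred word) (L : seq word) : seq word :=
  [seq v <- htrans (last [::] L) | S v && (v \notin L)].

Lemma greedy_runS S f L : greedy_run S f.+1 L =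
  if candidates S L is v :: _ then greedy_run S f (rcons L v) else L.
Proof. by []. Qed.

Lemma greedy_run_stop S f L : candidates S L = [::] -> greedy_run S f L = L.
Proof. by case: f => [|f] // E; rewrite greedy_runS E. Qed.

Lemma greedy_runD S a b L :
  greedy_run S (a + b) L = greedy_run S b (greedy_run S a L).
Proof.
elim: a L => [|a IH] L //; rewrite addSn !greedy_runS.
by case E: (candidates S L) => [|v r]; [rewrite greedy_run_stop | rewrite IH].
Qed.

Definition transp (w : word) (p q : nat) : word :=
  set_nth false (set_nth false w p false) q true.

Definition htrans_at (w : word) (p q : nat) : bool :=
  [&& p < size w, nth false w p, q < size w, ~~ nth false w q & no1between w p q].

Definition htrans_pos (w : word) : seq (nat * nat) :=
  [seq (p, q) | p <- [seq p <- iota 0 (size w) | nth false w p],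
                q <- [seq q <- iota 0 (size w) | (~~ nth false w q) && no1between w p q]].

Lemma htransE w : htrans w = [seq transp w pq.1 pq.2 | pq <- htrans_pos w].
Proof.
rewrite /htrans /htrans_pos map_flatten -map_comp; congr flatten.
by apply: eq_map => p /=; rewrite -map_comp.
Qed.

Lemma mem_htrans_pos w p q : ((p, q) \in htrans_pos w) = htrans_at w p q.
Proof.
apply/allpairsPdep/idP => [[p' [q' [Hp Hq [-> ->]]]]|].
  move: Hp Hq; rewrite !mem_filter !mem_iota /htrans_at.
  by case/andP=> -> /andP[_ ->] /andP[/andP[-> ->] /andP[_ ->]].
case/and5P=> Hp Wp Hq Wq Hb; exists p, q; split => //.
  by rewrite mem_filter Wp mem_iota.
by rewrite mem_filter Wq Hb mem_iota.
Qed.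

Lemma htrans_at_size w p q : htrans_at w p q -> p < size w /\ q < size w.
Proof. by case/and5P. Qed.

Definition lex_lt (a b : nat * nat) : bool :=
  (a.1 < b.1) || ((a.1 == b.1) && (a.2 < b.2)).

Lemma lex_lt_trans : transitive lex_lt.
Proof.
move=> [b1 b2] [a1 a2] [c1 c2]; rewrite /lex_lt /=.
case/orP=> [H|/andP[/eqP H H']]; case/orP=> [K|/andP[/eqP K K']]; apply/orP; lia.
Qed.

Lemma lex_lt_irr a : lex_lt a a = false.
Proof. by rewrite /lex_lt ltnn eqxx ltnn. Qed.

Lemma pairwise_lex_allpairs (s : seq nat) (t : nat -> seq nat) :
  sorted ltn s -> (forall p, sorted ltn (t p)) ->
  pairwise lex_lt [seq (p, q) | p <- s, q <- t p].
Proof.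
rewrite sorted_pairwise; last exact: ltn_trans.
move=> Hs Ht; elim: s Hs => [|p s IH] //= /andP[Hp Hs].
rewrite pairwise_cat IH // andbT; apply/andP; split.
  apply/allrelP => a b /mapP[q _ ->] /allpairsPdep[p' [q' [Hp' _ ->]]].
  by apply/orP; left; exact: (allP Hp _ Hp').
rewrite pairwise_map; move: (Ht p); rewrite sorted_pairwise; last exact: ltn_trans.
by apply: sub_pairwise => q q' /= Hqq'; rewrite /lex_lt /= eqxx /= Hqq' orbT.
Qed.

Lemma pairwise_lex_htrans_pos w : pairwise lex_lt (htrans_pos w).
Proof.
by apply: pairwise_lex_allpairs => [|p];
  apply: sorted_filter; do [exact: ltn_trans | exact: iota_ltn_sorted].
Qed.

Lemma pairwise_cat_cons (A : Type) (r : rel A) s1 z s2 :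
  pairwise r (s1 ++ z :: s2) -> all (r^~ z) s1 /\ all (r z) s2.
Proof.
by rewrite pairwise_cat pairwise_cons allrel_consr => /and3P[/andP[-> _] _ /andP[-> _]].
Qed.

Lemma mem_split (T : eqType) (x : T) s : x \in s -> exists s1 s2, s = s1 ++ x :: s2.
Proof. by case/splitPr => s1 s2; exists s1, s2. Qed.

Lemma filter_cons_split (A : Type) (P : pred A) s z r :
  filter P s = z :: r -> exists s1 s2, s = s1 ++ z :: s2 /\ all (predC P) s1.
Proof.
elim: s => [|a s IH] //=; case: ifP => Pa.
  by case=> <- _; exists [::], s.
by case/IH=> [s1 [s2 [-> H]]]; exists (a :: s1), s2; rewrite /= Pa.
Qed.

Lemma htrans_filter_min w (Q : pred word) p0 q0 :
  htrans_at w p0 q0 -> Q (transp w p0 q0) ->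
  (forall p q, htrans_at w p q -> lex_lt (p, q) (p0, q0) -> ~~ Q (transp w p q)) ->
  exists r, [seq v <- htrans w | Q v] = transp w p0 q0 :: r.
Proof.
move=> Hv HQ Hmin; rewrite htransE.
have [s1 [s2 Es]] : exists s1 s2, htrans_pos w = s1 ++ (p0, q0) :: s2.
  by apply: mem_split; rewrite mem_htrans_pos.
have Hpos pq : pq \in s1 -> htrans_at w pq.1 pq.2.
  by case: pq => p q Hpq; rewrite -mem_htrans_pos Es mem_cat Hpq.
have Hlex : pairwise lex_lt (s1 ++ (p0, q0) :: s2) by rewrite -Es pairwise_lex_htrans_pos.
have [/allP Hs1 _] := pairwise_cat_cons Hlex.
rewrite Es map_cat filter_cat /= HQ.
exists [seq v <- [seq transp w pq.1 pq.2 | pq <- s2] | Q v].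
suff -> : [seq v <- [seq transp w pq.1 pq.2 | pq <- s1] | Q v] = [::] by [].
apply/eqP; rewrite -(negbK (_ == _)) -has_filter; apply/hasPn => _ /mapP[[p q] Hpq ->].
by apply: Hmin; [exact: (Hpos (p, q)) | exact: Hs1].
Qed.

Lemma htrans_filter_minP w (Q : pred word) v r :
  [seq u <- htrans w | Q u] = v :: r ->
  exists p0 q0, [/\ htrans_at w p0 q0, v = transp w p0 q0, Q v &
    forall p q, htrans_at w p q -> lex_lt (p, q) (p0, q0) -> ~~ Q (transp w p q)].
Proof.
rewrite htransE filter_map.
case E: [seq x <- htrans_pos w | preim (fun pq => transp w pq.1 pq.2) Q x]
  => [|[p0 q0] r'] //= [Ev _].
have [s1 [s2 [Es Hs1]]] := filter_cons_split E.
have HQ : Q (transp w p0 q0).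
  by have := mem_head (p0, q0) r'; rewrite -E mem_filter => /andP[].
have Hlex : pairwise lex_lt (s1 ++ (p0, q0) :: s2) by rewrite -Es pairwise_lex_htrans_pos.
have [_ /allP Hs2] := pairwise_cat_cons Hlex.
exists p0, q0; split; rewrite -?mem_htrans_pos ?Es -?Ev ?mem_cat ?mem_head ?orbT //.
move=> p q; rewrite -mem_htrans_pos Es mem_cat inE.
case/or3P=> [Hin|/eqP[-> ->]|Hin] Hlt.
- by have := allP Hs1 _ Hin.
- by rewrite lex_lt_irr in Hlt.
- by have := lex_lt_trans Hlt (Hs2 _ Hin); rewrite lex_lt_irr.
Qed.

Lemma set_nth_catl (x s : word) i b : i < size x ->
  set_nth false (x ++ s) i b = set_nth false x i b ++ s.
Proof. by elim: x i => [|a x IH] [|i] //= H; rewrite IH. Qed.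

Lemma set_nth_catr (x s : word) i b : size x <= i ->
  set_nth false (x ++ s) i b = x ++ set_nth false s (i - size x) b.
Proof.
move=> Hi; rewrite -{1}(subnKC Hi); move: (i - size x) => j.
by elim: x {Hi} => [|a x IH] //=; rewrite IH.
Qed.

Lemma size_transp w p q : p < size w -> q < size w -> size (transp w p q) = size w.
Proof. by move=> Hp Hq; rewrite /transp !size_set_nth; lia. Qed.

Lemma transp_catl x s p q : p < size x -> q < size x ->
  transp (x ++ s) p q = transp x p q ++ s.
Proof.
move=> Hp Hq; rewrite /transp set_nth_catl // set_nth_catl // size_set_nth; lia.
Qed.

Lemma nth_transp w p q r : nth false (transp w p q) r =
  if r == q then true else if r == p then false else nth false w r.
Proof. by rewrite /transp nth_set_nth /= nth_set_nth. Qed.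

Lemma no1betweenP w p q :
  reflect (forall r, minn p q < r < maxn p q -> nth false w r = false)
          (no1between w p q).
Proof.
apply: (iffP allP) => H r.
  by move=> Hr; apply/negbTE/H; rewrite mem_iota; lia.
by rewrite mem_iota => Hr; rewrite H //; lia.
Qed.

Lemma htrans_at_catl x s p q : p < size x -> q < size x ->
  htrans_at (x ++ s) p q = htrans_at x p q.
Proof.
move=> Hp Hq; rewrite /htrans_at; have -> : no1between (x ++ s) p q = no1between x p q.
  by apply/no1betweenP/no1betweenP => H r Hr; move: (H r Hr); rewrite nth_cat ifT //; lia.
by rewrite !nth_cat size_cat Hp Hq /= !ltn_addr.
Qed.

Lemma cats_inj (s : word) : injective (cat^~ s).
Proof.
move=> y1 y2 /= E; have := congr1 (fun u => take (size u - size s) u) E.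
by rewrite /= !size_cat !addnK !take_size_cat.
Qed.

Lemma last_cat_map_cats (P L : seq word) s :
  L != [::] -> last [::] (P ++ map (cat^~ s) L) = last [::] L ++ s.
Proof. by case: L => [|x L] //= _; rewrite last_cat /= (last_map (cat^~ s)). Qed.

(* A greedy run for [S'] lifts to a greedy run for [S] on the words [y ++ s],
   after any prefix [P] avoiding them: the transpositions preceding the greedy
   choice in [htrans] do not touch [s], so the greedy choices correspond. *)
Section SuffixRun.

Variables (S S' : pred word) (s : word) (P : seq word).
Hypothesis S_cats : forall y, S (y ++ s) = S' y.
Hypothesis P_cats : forall y, y ++ s \notin P.

Lemma fresh_cats L y :
  S (y ++ s) && (y ++ s \notin P ++ map (cat^~ s) L) = S' y && (y \notin L).
Proof. by rewrite S_cats mem_cat (negbTE (P_cats y)) (mem_map (@cats_inj s)). Qed.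

Lemma candidates_cats L v r : L != [::] -> candidates S' L = v :: r ->
  exists r', candidates S (P ++ map (cat^~ s) L) = (v ++ s) :: r'.
Proof.
rewrite /candidates => L0; rewrite last_cat_map_cats //; set x := last [::] L.
case/htrans_filter_minP=> [p0 [q0 [Hv -> HQ Hmin]]].
have [Hp0 Hq0] := htrans_at_size Hv.
rewrite -transp_catl //; apply: htrans_filter_min => [|/=|p q Hpq Hlt].
- by rewrite htrans_at_catl.
- by rewrite transp_catl // fresh_cats.
have [Hp Hq] : p < size x /\ q < size x.
  move: Hlt; rewrite /lex_lt /= => /orP[Hpp|/andP[/eqP Epp Hqq]]; last by split; lia.
  split; first lia; rewrite ltnNge; apply/negP => Hq.
  move: Hpq => /and5P[_ _ _ _ /no1betweenP /(_ p0)].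
  by rewrite nth_cat Hp0; case/and5P: Hv => _ -> _ _ _ /(_ ltac:(lia)).
by rewrite transp_catl // fresh_cats; apply: Hmin; rewrite // -(htrans_at_catl s).
Qed.

Lemma greedy_run_cats m L0 L : L0 != [::] -> greedy_run S' m L0 = L ->
  size L = size L0 + m ->
  greedy_run S m (P ++ map (cat^~ s) L0) = P ++ map (cat^~ s) L.
Proof.
elim: m L0 => [|m IH] L0 L00; first by move=> /= ->.
rewrite greedy_runS; case E: (candidates S' L0) => [|v r].
  by move=> <- /eqP; rewrite -{1}[size L0]addn0 eqn_add2l.
move=> Hrun Hsize; have [r' E'] := candidates_cats L00 E.
rewrite greedy_runS E' rcons_cat -map_rcons; apply: IH => //.
  by case: (L0).
by rewrite size_rcons; lia.
Qed.

End SuffixRun.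

Lemma suffix_partitioned_rcons b (L : seq word) : suffix_partitioned L ->
  suffix_partitioned (map (rcons^~ b) L).
Proof.
move=> H s i j l Hil Hlj; rewrite size_map => Hj; rewrite !(nth_map [::]); try lia.
case/lastP: s => [|s c]; first by move=> *; apply: suffix0s.
rewrite !suffix_rcons => /andP[/eqP-> Hi] /andP[_ Hjs].
by rewrite eqxx (H _ i j l).
Qed.

Lemma suffix_partitioned_cats s (L : seq word) : suffix_partitioned L ->
  suffix_partitioned (map (cat^~ s) L).
Proof.
elim/last_ind: s L => [|s b IH] L H.
  by rewrite (eq_map (g := id)) ?map_id // => y; rewrite /= cats0.
have -> : map (cat^~ (rcons s b)) L = map (rcons^~ b) (map (cat^~ s) L).
  by rewrite -map_comp; apply: eq_map => y /=; rewrite -!cats1 catA.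
exact/suffix_partitioned_rcons/IH.
Qed.

Lemma suffix_partitioned_cat (L1 L2 : seq word) :
  suffix_partitioned L1 -> suffix_partitioned L2 ->
  (forall s u v, u \in L1 -> v \in L2 -> suffix s u -> suffix s v -> s = [::]) ->
  suffix_partitioned (L1 ++ L2).
Proof.
move=> H1 H2 H12 s i j l Hil Hlj; rewrite size_cat => Hj; rewrite !nth_cat.
have [Hj1|Hj1] := ltnP j (size L1).
  have [-> ->] : i < size L1 /\ l < size L1 by split; lia.
  exact: H1.
have [Hi1|Hi1] := ltnP i (size L1).
  move=> Hsi Hsj.
  have Hj2 : j - size L1 < size L2 by lia.
  by rewrite (H12 s _ _ (mem_nth [::] Hi1) (mem_nth [::] Hj2) Hsi Hsj) suffix0s.
have Hl1 : size L1 <= l by lia.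
rewrite ltnNge Hl1 /=.
by apply: (H2 s (i - size L1) (j - size L1) (l - size L1)); lia.
Qed.

(* The bound [2 ^ n] on the length ensures that the fuel of [greedy] suffices. *)
Definition gray_run (n : nat) (S : pred word) (x : word) (L : seq word) (z : word) :=
  [/\ S x, exists m, greedy_run S m [:: x] = L /\ size L = m.+1,
      forall u, S u -> u \in L, suffix_partitioned L & last [::] L = z /\ size L <= 2 ^ n].

Lemma gray_run1 n (S : pred word) x : S x -> (forall u, S u -> u = x) ->
  gray_run n S x [:: x] x.
Proof.
move=> Sx Sx1; split => //; first by exists 0.
- by move=> u /Sx1 ->; rewrite inE.
- by move=> s i j l Hil Hlj /= Hj; have -> : l = i by lia.
- by rewrite expn_gt0.
Qed.

Lemma gray_run_cat n n1 n2 (S S1 S2 : pred word) s1 s2 x1 L1 z1 x2 L2 z2 :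
  gray_run n1 S1 x1 L1 z1 -> gray_run n2 S2 x2 L2 z2 ->
  (forall y, S (y ++ s1) = S1 y) -> (forall y, S (y ++ s2) = S2 y) ->
  (forall u, S u -> (exists y, u = y ++ s1) \/ (exists y, u = y ++ s2)) ->
  (forall y y', y ++ s1 != y' ++ s2) ->
  (forall t u v, suffix t (u ++ s1) -> suffix t (v ++ s2) -> t = [::]) ->
  (exists r, [seq u <- htrans (z1 ++ s1) | S u && (u \notin map (cat^~ s1) L1)]
             = (x2 ++ s2) :: r) ->
  2 ^ n1 + 2 ^ n2 <= 2 ^ n ->
  gray_run n S (x1 ++ s1) (map (cat^~ s1) L1 ++ map (cat^~ s2) L2) (z2 ++ s2).
Proof.
move=> [Sx1 [m1 [R1 Z1]] C1 P1 [E1 B1]] [Sx2 [m2 [R2 Z2]] C2 P2 [E2 B2]].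
move=> H1 H2 Hcover Hdisj Hsuf [r Hnext] Hpow.
have L1ne : L1 != [::] by case: (L1) Z1.
have L2ne : L2 != [::] by case: (L2) Z2.
have R1' : greedy_run S m1 [:: x1 ++ s1] = map (cat^~ s1) L1.
  by have := @greedy_run_cats S S1 s1 [::] H1 (fun y => erefl) m1 [:: x1] L1 erefl R1 Z1.
split.
- by rewrite H1.
- exists (m1 + m2.+1); split; last by rewrite size_cat !size_map Z1 Z2; lia.
  have := last_cat_map_cats [::] s1 L1ne; rewrite E1 /= => Elast.
  rewrite greedy_runD R1' greedy_runS /candidates Elast Hnext -cats1.
  apply: (@greedy_run_cats _ S2 s2 _ H2 _ _ [:: x2]) => // y.
  by apply/mapP => -[y' _ E]; move: (Hdisj y' y); rewrite E eqxx.
- move=> u Su; rewrite mem_cat.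
  case: (Hcover u Su) => -[y Ey]; rewrite Ey in Su *.
  + by rewrite (mem_map (@cats_inj s1)) C1 // -H1.
  + by rewrite (mem_map (@cats_inj s2)) C2 ?orbT // -H2.
- apply: suffix_partitioned_cat; try exact: suffix_partitioned_cats.
  by move=> t u v /mapP[y _ ->] /mapP[y' _ ->]; apply: Hsuf.
split.
- by rewrite last_cat_map_cats // E2.
- by rewrite size_cat !size_map; apply: leq_trans Hpow; exact: leq_add.
Qed.

Lemma size_zeros m : size (zeros m) = m.
Proof. exact: size_nseq. Qed.

Lemma zerosSr m : zeros m.+1 = zeros m ++ [:: false].
Proof. by rewrite /zeros -addn1 nseqD. Qed.

Lemma zeros_cat01 t : zeros t ++ [:: false; true] = false :: zeros t ++ [:: true].
Proof. by elim: t => //= t ->. Qed.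

Definition gap (y : word) (b : bool) (t : nat) (c : bool) : word :=
  y ++ b :: zeros t ++ [:: c].

Lemma size_gap y b t c : size (gap y b t c) = size y + t.+2.
Proof. by rewrite /gap size_cat /= size_cat size_zeros addn1 addnS. Qed.

Lemma nth_gap y b t c r : nth false (gap y b t c) r =
  if r < size y then nth false y r else if r == size y then b
  else if r == size y + t.+1 then c else false.
Proof.
rewrite /gap nth_cat; case: ifP => // Hr.
case Er: (r - size y) => [|j] /=; first by rewrite ifT; lia.
rewrite ifF; last lia.
rewrite nth_cat size_zeros; case: (ltnP j t) => Hj.
  by rewrite nth_nseq if_same ifF; lia.
by case Ej: (j - t) => [|i] /=; [rewrite ifT | rewrite ifF ?nth_nil]; lia.
Qed.

Lemma no11_cons b u : no11 (b :: u) -> no11 u.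
Proof. by case: b; case: u => [|[] u]. Qed.

Lemma no11_nth u i : no11 u -> nth false u i -> nth false u i.+1 -> False.
Proof.
elim: u i => [|b u IH] [|i] //=; first by case: b; case: u IH => [|[] u].
by move/no11_cons; apply: IH.
Qed.

Lemma transp_next_to_one w p q r : r != p -> nth false w r ->
  (q.+1 == r) || (r.+1 == q) -> ~~ no11 (transp w p q).
Proof.
move=> Hrp Hr Hqr; apply/negP => Hno.
have Hr' : nth false (transp w p q) r.
  by rewrite nth_transp (negbTE Hrp) Hr if_same.
have Hq : nth false (transp w p q) q by rewrite nth_transp eqxx.
by case/orP: Hqr => /eqP E; [apply: (no11_nth Hno Hq) | apply: (no11_nth Hno Hr')];
   rewrite E.
Qed.

Lemma nth_gap_ones y b t c r : nth false (gap y b t c) r ->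
  [\/ r < size y, r = size y | r = size y + t.+1].
Proof.
rewrite nth_gap; case: ltnP => Hr; first by constructor 1.
by case: eqP => [->|_ ]; [constructor 2 | case: eqP => // ->; constructor 3].
Qed.

Lemma nth_gap_first y b t c : nth false (gap y b t c) (size y) = b.
Proof. by rewrite nth_gap ltnn eqxx. Qed.

Lemma nth_gap_last y b t c : nth false (gap y b t c) (size y + t.+1) = c.
Proof.
rewrite nth_gap.
have [-> ->] : (size y + t.+1 < size y) = false /\ (size y + t.+1 == size y) = false.
  by split; lia.
by rewrite eqxx.
Qed.

Lemma htrans_gap_right y t (Q : pred word) :
  (forall u, size u = size y + t.+1 -> ~~ Q (u ++ [:: false])) ->
  Q (gap y false t true) ->
  exists r, [seq v <- htrans (gap y true t false) | Q v] = gap y false t true :: r.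
Proof.
move=> Qend HQ.
have ET : transp (gap y true t false) (size y) (size y + t.+1) = gap y false t true.
  rewrite /transp /gap set_nth_catr // subnn /= set_nth_catr; last lia.
  rewrite (_ : size y + t.+1 - size y = t.+1) /=; last lia.
  by rewrite set_nth_catr size_zeros // subnn.
rewrite -ET in HQ *; apply: htrans_filter_min => //.
  rewrite /htrans_at size_gap nth_gap_first (nth_gap_last y true t) /=.
  apply/and3P; split; try lia.
  apply/no1betweenP => r Hr; rewrite nth_gap.
  have [-> -> ->] : [/\ r < size y = false, r == size y = false & r == size y + t.+1 = false].
    by split; lia.
  done.
move=> p q /and5P[Hp Wp Hq Wq Hb] Hlt.
rewrite size_gap in Hp Hq; have Hp' : p < size y + t.+1 by move: Hlt; rewrite /lex_lt /=; lia.
have [Hq'|Hq'] := ltnP q (size y + t.+1).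
  have -> : gap y true t false = (y ++ true :: zeros t) ++ [:: false] by rewrite /gap -catA.
  rewrite transp_catl ?size_cat /= ?size_zeros; try lia.
  by apply: Qend; rewrite size_transp ?size_cat /= ?size_zeros; lia.
(* the only 0 to the right of [y ++ [:: true]] is the last letter, and the 1 at
   [size y] lies in between *)
have Hpy : p < size y by move: Hlt; rewrite /lex_lt /=; lia.
move/no1betweenP: Hb => /(_ (size y)); rewrite nth_gap ltnn eqxx => H.
by have : true = false by apply: H; lia.
Qed.

Lemma htrans_gap_left y t (Q : pred word) :
  (forall u, size u = size y + t.+2 -> ~~ Q (u ++ [:: false; true])) ->
  (forall u, Q u -> no11 u) ->
  Q (gap (y ++ [:: true; false]) true t false) ->
  exists r, [seq v <- htrans (gap y true t.+2 true) | Q v] =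
            gap (y ++ [:: true; false]) true t false :: r.
Proof.
move=> Qend Qno11 HQ; set w := gap y true t.+2 true.
have ET : transp w (size y + t.+3) (size y + 2) = gap (y ++ [:: true; false]) true t false.
  rewrite /transp /w /gap set_nth_catr; last lia.
  rewrite (_ : size y + t.+3 - size y = t.+3) /=; last lia.
  rewrite (@set_nth_catr (zeros t)) ?size_zeros // subnn /= set_nth_catr; last lia.
  by rewrite (_ : size y + 2 - size y = 2) -?catA; last lia.
have Hny p q : no1between w p q -> ~ (minn p q < size y < maxn p q).
  by move/no1betweenP/(_ (size y)); rewrite nth_gap_first => H /H.
rewrite -ET in HQ *; apply: htrans_filter_min => //.
  rewrite /htrans_at size_gap (nth_gap_last y true t.+2) nth_gap; apply/and5P; split; try lia.
  - by rewrite ifF ?ifF //; lia.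
  - by apply/no1betweenP => r Hr; rewrite nth_gap ifF ?ifF ?ifF //; lia.
move=> p q /and5P[Hp Wp Hq Wq Hb] Hlt; rewrite size_gap in Hp Hq.
have nextQ r : r != p -> nth false w r -> (q.+1 == r) || (r.+1 == q) ->
    ~~ Q (transp w p q).
  move=> Hrp Hr Hqr; apply/negP => /Qno11.
  exact/negP/(transp_next_to_one Hrp Hr Hqr).
have [Hp2|Hp2] := ltnP p (size y + t.+2).
  have [Hq2|Hq2] := ltnP q (size y + t.+2).
    have -> : w = (y ++ true :: false :: zeros t) ++ [:: false; true].
      by rewrite /w /gap -catA /= -zeros_cat01.
    rewrite transp_catl ?size_cat /= ?size_zeros; try lia.
    by apply: Qend; rewrite size_transp ?size_cat /= ?size_zeros; lia.
  have Eq : q = size y + t.+2.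
    by apply/eqP; rewrite eqn_leq Hq2 andbT; move: Wq; apply: contraR => ?;
       rewrite (_ : q = size y + t.+3) ?nth_gap_last //; lia.
  have Ep : p = size y by case/nth_gap_ones: Wp => Ep; [case: (Hny _ _ Hb) | |]; lia.
  by apply: (nextQ (size y + t.+3)); rewrite ?nth_gap_last ?Ep ?Eq //; lia.
have Ep : p = size y + t.+3 by case/nth_gap_ones: Wp; lia.
have Eq : q = (size y).+1.
  move: Hlt; rewrite /lex_lt Ep /= => Hq1.
  case: (ltnP q (size y)) => Hqy; first by case: (Hny _ _ Hb); lia.
  by move: Wq; case: (eqVneq q (size y)) => [->|]; rewrite ?nth_gap_first //; lia.
by apply: (nextQ (size y)); rewrite ?nth_gap_first ?Ep ?Eq //; lia.
Qed.

Lemma htrans_gap_front a (Q : pred word) :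
  Q (gap [::] true a false) ->
  exists r, [seq v <- htrans (gap [::] false a true) | Q v] = gap [::] true a false :: r.
Proof.
move=> HQ.
have ET : transp (gap [::] false a true) a.+1 0 = gap [::] true a false.
  by rewrite /transp /gap /= set_nth_catr size_zeros // subnn.
rewrite -ET in HQ *; apply: htrans_filter_min => //.
  rewrite /htrans_at size_gap (nth_gap_last [::] false a true) nth_gap_first /=.
  apply/andP; split; first lia.
  apply/no1betweenP => r Hr; rewrite nth_gap /=.
  by have [-> ->] : (r == 0) = false /\ (r == a.+1) = false by split; lia.
move=> p q /and5P[_ Wp _ _ _] Hlt.
have Ep : p = a.+1 by move: Wp; rewrite nth_gap /=; case: eqP => // _; case: eqP.
by move: Hlt; rewrite /lex_lt Ep /=; lia.
Qed.

Lemma no11_cat0 x t : no11 (x ++ false :: t) = no11 x && no11 t.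
Proof. by elim: x => [|a x IH] //=; case: a; case: x IH => [|[] x]. Qed.

Lemma Fn_cat0 n k y : 0 < n -> Fn n k (y ++ [:: false]) = Fn n.-1 k y.
Proof.
move=> Hn; rewrite /Fn size_cat /weight count_cat no11_cat0 andbT /= !addn0.
by congr andb; apply/eqP/eqP; lia.
Qed.

Lemma Fn_cat01 n k y : 1 < n -> 0 < k ->
  Fn n k (y ++ [:: false; true]) = Fn n.-2 k.-1 y.
Proof.
move=> Hn Hk; rewrite /Fn size_cat /weight count_cat no11_cat0 andbT /=.
by congr andb; [|congr andb]; apply/eqP/eqP; lia.
Qed.

Lemma Fn_cat0_cat01 n k u : 1 < n -> Fn n k u ->
  (exists y, u = y ++ [:: false]) \/ (exists y, u = y ++ [:: false; true]).
Proof.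
move=> Hn /and3P[/eqP Hs _ Hno].
case/lastP: u Hs Hno => [|u b] Hs Hno; first by move: Hs => /= E; lia.
case: b Hs Hno => Hs Hno; last by left; exists u; rewrite cats1.
case/lastP: u Hs Hno => [|u c] Hs Hno; first by move: Hs => /= E; lia.
case: c Hs Hno => Hs Hno; last by right; exists u; rewrite -!cats1 -catA.
case: (no11_nth (i := size u) Hno).
  by rewrite !nth_rcons size_rcons ltnSn ltnn eqxx.
by rewrite !nth_rcons size_rcons ltnn eqxx.
Qed.

Lemma cat0_neq_cat01 y y' : y ++ [:: false] != y' ++ [:: false; true].
Proof. by apply/eqP => /(congr1 (last false)); rewrite !last_cat. Qed.

Lemma suffix_cat0_cat01 t u v :
  suffix t (u ++ [:: false]) -> suffix t (v ++ [:: false; true]) -> t = [::].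
Proof.
case/lastP: t => [|t c] //.
have -> : v ++ [:: false; true] = rcons (v ++ [:: false]) true by rewrite -cats1 -catA.
by rewrite cats1 !suffix_rcons => /andP[/eqP -> _] /andP[].
Qed.

Lemma expn2_pred1_pred2 n : 1 < n -> 2 ^ n.-1 + 2 ^ n.-2 <= 2 ^ n.
Proof. by case: n => [|[|n]] // _; rewrite /= !expnS; lia. Qed.

Lemma gray_run_Fn_0_01 n k x1 L1 z1 x2 L2 z2 y t : 1 < n -> 0 < k ->
  gray_run n.-1 (Fn n.-1 k) x1 L1 z1 -> gray_run n.-2 (Fn n.-2 k.-1) x2 L2 z2 ->
  z1 = y ++ true :: zeros t -> x2 ++ [:: false; true] = gap y false t true ->
  gray_run n (Fn n k) (x1 ++ [:: false])
    (map (cat^~ [:: false]) L1 ++ map (cat^~ [:: false; true]) L2) (z2 ++ [:: false; true]).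
Proof.
move=> Hn Hk G1 G2 Ez1 Ex2.
have [_ _ C1 _ _] := G1; have [Sx2 _ _ _ _] := G2.
apply: (gray_run_cat G1 G2) => //.
- by move=> u; rewrite Fn_cat0 //; lia.
- by move=> u; rewrite Fn_cat01.
- by move=> u; apply: Fn_cat0_cat01.
- exact: cat0_neq_cat01.
- exact: suffix_cat0_cat01.
- rewrite (_ : z1 ++ _ = gap y true t false) ?Ex2; last by rewrite Ez1 /gap -catA.
  apply: htrans_gap_right => [u _|].
    rewrite Fn_cat0; last lia.
    by case E: (Fn n.-1 k u) => //=; rewrite negbK (map_f (cat^~ _)) ?C1.
  rewrite -Ex2 Fn_cat01 // Sx2 /=; apply/mapP => -[v _ E].
  by move: (cat0_neq_cat01 v x2); rewrite E eqxx.
- exact: expn2_pred1_pred2.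
Qed.

Lemma gap2E y t : (y ++ true :: false :: zeros t) ++ [:: false; true] = gap y true t.+2 true.
Proof. by rewrite /gap -catA /= zeros_cat01. Qed.

(* The shapes of [z] and [x] for which the first fresh transposition of [z ++ 01]
   moves its last 1 to the left, giving [x ++ 0]. *)
Definition moves_last_one_back (z x : word) : Prop :=
  (exists y t, z = y ++ true :: false :: zeros t /\
     x ++ [:: false] = gap (y ++ [:: true; false]) true t false) \/
  (exists a, z = zeros a /\ x ++ [:: false] = gap [::] true a false).

Lemma gray_run_Fn_01_0 n k x1 L1 z1 x2 L2 z2 : 1 < n -> 0 < k ->
  gray_run n.-2 (Fn n.-2 k.-1) x1 L1 z1 -> gray_run n.-1 (Fn n.-1 k) x2 L2 z2 ->
  moves_last_one_back z1 x2 ->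
  gray_run n (Fn n k) (x1 ++ [:: false; true])
    (map (cat^~ [:: false; true]) L1 ++ map (cat^~ [:: false]) L2) (z2 ++ [:: false]).
Proof.
move=> Hn Hk G1 G2 Hz1.
have [_ _ C1 _ _] := G1; have [Sx2 _ _ _ _] := G2.
have Qx2 : Fn n k (x2 ++ [:: false]) &&
           (x2 ++ [:: false] \notin map (cat^~ [:: false; true]) L1).
  rewrite Fn_cat0; last lia.
  rewrite Sx2 /=; apply/mapP => -[v _ E].
  by move: (cat0_neq_cat01 x2 v); rewrite E eqxx.
apply: (gray_run_cat G1 G2) => //.
- by move=> u; rewrite Fn_cat01.
- by move=> u; rewrite Fn_cat0 //; lia.
- by move=> u /(Fn_cat0_cat01 Hn) [] H; [right | left].
- by move=> u v; rewrite eq_sym cat0_neq_cat01.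
- by move=> s u v Hu Hv; apply: suffix_cat0_cat01 Hv Hu.
- case: Hz1 => [[y [t [-> Ex2]]]|[a [-> Ex2]]]; rewrite Ex2 in Qx2 *.
    rewrite gap2E; apply: htrans_gap_left => // [u _|u /andP[/and3P[]] //].
    rewrite Fn_cat01 //.
    by case E: (Fn n.-2 k.-1 u) => //=; rewrite negbK (map_f (cat^~ _)) ?C1.
  rewrite (_ : zeros a ++ _ = gap [::] false a true); last by rewrite /gap zeros_cat01.
  exact: htrans_gap_front.
- by have := expn2_pred1_pred2 Hn; lia.
Qed.

Lemma zeros_cat0 m s : zeros m ++ false :: s = zeros m.+1 ++ s.
Proof. by elim: m => //= m ->. Qed.

Lemma zoSr m : zo m.+1 = zo m ++ [:: false; true].
Proof.
elim: m => [|m IH] //.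
by rewrite (_ : zo m.+2 = false :: true :: zo m.+1) // [in LHS]IH.
Qed.

Lemma size_zo m : size (zo m) = 2 * m.
Proof. by elim: m => //= m ->; lia. Qed.

Lemma weight_zo m : weight (zo m) = m.
Proof. by elim: m => //= m; rewrite /weight /= => ->. Qed.

Lemma no11_tzo m : no11 (true :: zo m).
Proof. by elim: m. Qed.

Lemma weight_no11 u : no11 u -> 2 * weight u <= size u + 1.
Proof.
elim: {u}(size u) {-2}u (leqnn (size u)) => [|N IH] [|a u] //= Hs Hno.
case: a Hno => Hno; last by have := IH u (ltnSE Hs) Hno; rewrite /weight /=; lia.
case: u Hs Hno => [|[] u] //= Hs Hno.
by have := IH u ltac:(lia) Hno; rewrite /weight /=; lia.
Qed.

Lemma Fn_zeros n u : Fn n 0 u = (u == zeros n).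
Proof.
apply/idP/eqP => [/and3P[/eqP Hs Hw _]|->]; last first.
  by rewrite /Fn size_zeros eqxx /=; elim: n.
elim: u n Hs Hw => [|a u IH] [|n] //= [Hs]; rewrite /weight /=.
by case: a => //= Hw; rewrite (IH n).
Qed.

Lemma Fn_tzo K u : Fn (2 * K + 1) K.+1 u = (u == true :: zo K).
Proof.
apply/idP/eqP => [/and3P[/eqP Hs /eqP Hw Hno]|->]; last first.
  rewrite /Fn no11_tzo andbT /= size_zo /weight /= -/(weight (zo K)) weight_zo.
  by apply/andP; split; apply/eqP; lia.
elim: K u Hs Hw Hno => [|K IH] [|a u] //=.
  move=> Hs Hw _; case: u Hs Hw => [|b u] /= Hs Hw; last by exfalso; lia.
  by case: a Hw.
case: a => [|] [Hs] Hw Hno; last first.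
  by have := weight_no11 Hno; move: Hw; rewrite /weight /=; lia.
case: u Hs Hw Hno => [|[] u] //= Hs Hw Hno.
rewrite (IH u) //; first by move: Hs; lia.
by move: Hw; rewrite /weight /=; lia.
Qed.

(* [alt K] is [1 (01)^K] without its last letter. *)
Definition alt (K : nat) : word := if K is K'.+1 then true :: zo K' ++ [:: false] else [::].

Lemma altS K : alt K.+1 = alt K ++ [:: true; false].
Proof. by case: K => [|K] //; rewrite /alt zoSr /= -!catA. Qed.

Lemma alt_true K R : alt K ++ true :: R = true :: zo K ++ R.
Proof.
by elim: K R => [|K IH] R //; rewrite altS -catA (IH [:: false, true & R]) zoSr -catA.
Qed.

(* For [n = 2 K.+1 + d] and [k = K.+1], [alpha_word K d i] is alpha_{n,k}^i and
   [gamma_word K d] is gamma_{n,k}. *)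
Definition alpha_word (K d i : nat) : word := zeros i ++ alt K ++ true :: zeros (d.+1 - i).

Definition gamma_word (K d : nat) : word := zeros d ++ zo K.+1.

Definition last_alpha_index (k d : nat) : nat := if odd k then d else 0.

Lemma last_alpha_index_le k d : last_alpha_index k d <= d.
Proof. by rewrite /last_alpha_index; case: ifP. Qed.

Lemma alpha_wordS K d i : i <= d -> alpha_word K d.+1 i = alpha_word K d i ++ [:: false].
Proof. by move=> Hi; rewrite /alpha_word (subSn (_ : i <= d.+1)) 1?zerosSr -?catA //; lia. Qed.

Lemma gamma_word_alt K d : gamma_word K d = zeros d.+1 ++ alt K ++ [:: true].
Proof. by rewrite /gamma_word alt_true cats0 -zeros_cat0. Qed.

Lemma alpha_word_last K d : alpha_word K d.+1 d.+1 = gamma_word K d ++ [:: false].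
Proof. by rewrite gamma_word_alt /alpha_word subSnn -!catA. Qed.

Definition alpha_runs (N K d : nat) : Prop := forall i, i <= d ->
  exists L, gray_run N (Fn N K.+1) (alpha_word K d i) L (gamma_word K d).

Definition gamma_run (N K d : nat) : Prop :=
  exists L, gray_run N (Fn N K.+1) (gamma_word K d) L
                     (alpha_word K d (last_alpha_index K.+1 d)).

Definition runs_below (N : nat) : Prop := forall M K d, M < N -> 2 * K.+1 + d = M ->
  alpha_runs M K d /\ gamma_run M K d.

Lemma gray_run_zeros n : gray_run n (Fn n 0) (zeros n) [:: zeros n] (zeros n).
Proof. by apply: gray_run1 => [|u]; rewrite Fn_zeros // => /eqP. Qed.

Lemma gray_run_tzo K :
  gray_run (2 * K + 1) (Fn (2 * K + 1) K.+1) (true :: zo K) [:: true :: zo K] (true :: zo K).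
Proof. by apply: gray_run1 => [|u]; rewrite Fn_tzo // => /eqP. Qed.

(* After the block [calF n.-2 k.-1 gamma ++ 01], the greedy run from gamma_{n,k}
   continues with [gamma_next K d ++ 0]. *)
Definition gamma_next (K d : nat) : word :=
  zeros (last_alpha_index K d) ++ alt K ++ true :: zeros (d - last_alpha_index K d).

Section InductionStep.

Variables (N K d : nat).
Hypothesis EN : 2 * K.+1 + d = N.
Hypothesis IH : runs_below N.

Lemma tail_runs j : j <= d ->
  exists L, gray_run N.-2 (Fn N.-2 K) (zeros j ++ alt K ++ zeros (d - j)) L (zeros d ++ zo K).
Proof.
move=> Hj; case: K EN IH => [|K'] EN' IH'.
  rewrite /= -nseqD subnKC // (_ : N.-2 = d); last lia.
  by exists [:: zeros d]; rewrite cats0; apply: gray_run_zeros.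
have [HA _] := IH' N.-2 K' d ltac:(lia) ltac:(lia).
have [L HL] := HA j Hj; exists L.
by rewrite altS -catA; move: HL; rewrite /alpha_word subSn.
Qed.

Lemma alpha_run_from j x1 L1 : j <= d ->
  gray_run N.-1 (Fn N.-1 K.+1) x1 L1 (zeros j ++ alt K ++ true :: zeros (d - j)) ->
  exists L, gray_run N (Fn N K.+1) (x1 ++ [:: false]) L (gamma_word K d).
Proof.
move=> Hj G1; have [L2 G2] := tail_runs Hj.
rewrite /gamma_word zoSr catA; eexists.
apply: (gray_run_Fn_0_01 (y := zeros j ++ alt K) (t := d - j) _ _ G1 G2) => //; try lia.
- by rewrite -catA.
- by rewrite /gap -!catA zeros_cat01.
Qed.

Lemma alpha_runs_step : alpha_runs N K d.
Proof.
move=> i Hi; case: d EN IH Hi alpha_run_from => [|d'] EN' IH' Hi from.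
  have -> : i = 0 by lia.
  rewrite /alpha_word /= alt_true; apply: (from 0 (true :: zo K)) => //.
  by rewrite alt_true cats0 (_ : N.-1 = 2 * K + 1); [apply: gray_run_tzo | lia].
have [Hid|Hid] := ltnP i d'.+1.
  have [HA _] := IH' N.-1 K d' ltac:(lia) ltac:(lia).
  have [L1 G1] := HA i ltac:(lia).
  rewrite alpha_wordS; last lia.
  by apply: (from d'.+1 _ L1) => //; rewrite subnn -gamma_word_alt.
have -> : i = d'.+1 by lia.
have [_ [L1 G1]] := IH' N.-1 K d' ltac:(lia) ltac:(lia).
rewrite alpha_word_last; apply: (from (last_alpha_index K.+1 d') _ L1).
  by have := last_alpha_index_le K.+1 d'; lia.
exact: G1.
Qed.

Lemma gamma_first_block : exists L1 z1,
  gray_run N.-2 (Fn N.-2 K) (zeros d ++ zo K) L1 z1 /\ moves_last_one_back z1 (gamma_next K d).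
Proof.
rewrite /moves_last_one_back /gamma_next; case: K EN IH => [|K'] EN' IH'.
  exists [:: zeros d], (zeros d); split; last by right; exists d; rewrite subn0.
  by rewrite cats0 (_ : N.-2 = d); [apply: gray_run_zeros | lia].
have [_ [L1 G1]] := IH' N.-2 K' d ltac:(lia) ltac:(lia).
set e := last_alpha_index K'.+1 d; have He : e <= d by apply: last_alpha_index_le.
exists L1, (alpha_word K' d e); split => //; left; exists (zeros e ++ alt K'), (d - e).
by rewrite /alpha_word /gap altS subSn // -!catA.
Qed.

Lemma gamma_second_block : exists L2 z2,
  gray_run N.-1 (Fn N.-1 K.+1) (gamma_next K d) L2 z2 /\
  z2 ++ [:: false] = alpha_word K d (last_alpha_index K.+1 d).
Proof.
rewrite /gamma_next; case: d EN IH => [|d'] EN' IH'.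
  exists [:: true :: zo K], (true :: zo K).
  rewrite /alpha_word /last_alpha_index !if_same /= !alt_true cats0; split => //.
  by rewrite (_ : N.-1 = 2 * K + 1); [apply: gray_run_tzo | lia].
rewrite /last_alpha_index /=; case HK: (odd K).
  have [_ [L2 G2]] := IH' N.-1 K d' ltac:(lia) ltac:(lia).
  exists L2, (alpha_word K d' 0); split; last by rewrite /= alpha_wordS.
  rewrite (_ : _ ++ _ = gamma_word K d'); last by rewrite subnn gamma_word_alt.
  by move: G2; rewrite /last_alpha_index /= HK.
have [HA _] := IH' N.-1 K d' ltac:(lia) ltac:(lia).
have [L2 G2] := HA 0 (leq0n _).
by exists L2, (gamma_word K d'); rewrite -alpha_word_last.
Qed.

Lemma gamma_run_step : gamma_run N K d.
Proof.
have [L1 [z1 [G1 Hz1]]] := gamma_first_block.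
have [L2 [z2 [G2 Ez2]]] := gamma_second_block.
rewrite /gamma_run /gamma_word zoSr catA -Ez2; eexists.
by apply: (@gray_run_Fn_01_0 N K.+1 _ _ _ _ _ _ _ _ G1 G2 Hz1); lia.
Qed.

End InductionStep.

Lemma alpha_gamma_runs N K d : 2 * K.+1 + d = N -> alpha_runs N K d /\ gamma_run N K d.
Proof.
elim/ltn_ind: N K d => N IH K d EN.
have IHb : runs_below N by move=> M K' d' HM; apply: IH.
by split; [apply: alpha_runs_step | apply: gamma_run_step].
Qed.

Lemma alpha_alpha_word K d i : alpha (2 * K.+1 + d) K.+1 i = alpha_word K d i.
Proof.
rewrite /alpha /alpha_word alt_true subSS subn0.
by rewrite (_ : 2 * K.+1 + d - 2 * K.+1 + 1 - i = d.+1 - i); last lia.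
Qed.

Lemma gamma_gamma_word K d : gamma (2 * K.+1 + d) K.+1 = gamma_word K d.
Proof. by rewrite /gamma (_ : 2 * K.+1 + d - 2 * K.+1 = d); last lia. Qed.

Lemma gray_run_calF n k x L z : gray_run n (Fn n k) x L z ->
  [/\ forall w, Fn n k w -> w \in calF n k x, suffix_partitioned (calF n k x)
    & last [::] (calF n k x) = z].
Proof.
move=> [/and3P[/eqP Hx _ _] [m [R Z]] C P [E B]].
have -> : calF n k x = L.
  rewrite /calF /greedy Hx -(subnKC (_ : m <= 2 ^ n)); last lia.
  rewrite greedy_runD R greedy_run_stop //.
  apply/eqP; rewrite -(negbK (_ == _)) -has_filter; apply/hasPn => v _ /=.
  by case Sv: (Fn n k v) => //=; rewrite negbK C.
by [].
Qed.

Theorem theorem2 (n k : nat) :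
  1 <= n -> 1 <= k -> 2 * k <= n ->
  (forall i, i <= n - 2 * k ->
     [/\ (forall w, Fn n k w -> w \in calF n k (alpha n k i)),
         suffix_partitioned (calF n k (alpha n k i)) &
         last [::] (calF n k (alpha n k i)) = gamma n k])
  /\
  [/\ (forall w, Fn n k w -> w \in calF n k (gamma n k)),
      suffix_partitioned (calF n k (gamma n k)) &
      last [::] (calF n k (gamma n k)) =
        (if odd k then alpha n k (n - 2 * k) else alpha n k 0)].
Proof.
move=> _; case: k => // K _ HKn.
have [d ->] : exists d, n = 2 * K.+1 + d by exists (n - 2 * K.+1); lia.
rewrite (_ : 2 * K.+1 + d - 2 * K.+1 = d); last lia.
have [Halpha [L G]] := alpha_gamma_runs (erefl (2 * K.+1 + d)).
rewrite gamma_gamma_word; split=> [i Hi|].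
  by have [L' G'] := Halpha i Hi; rewrite alpha_alpha_word; apply: gray_run_calF G'.
by rewrite !alpha_alpha_word; have := gray_run_calF G; rewrite /last_alpha_index; case: ifP.
Qed.
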